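(* Under the hypotheses and with the construction of Theorem 1 (full approximate solution for nonnegativity constraints), there exist $\rho>0$, $\bar\mu\in(0,\hat\mu]$ and $C>0$ such that in the same regime (all $\mu\in(0,\bar\mu]$, $(x,\lambda)\in\mathcal B((x^*,\lambda^* ),\delta)$, $x>0,\lambda>0$, $\|(x,\lambda)-(x^\mu,\lambda^\mu)\|<\rho$, $\|F_\mu(x,\lambda)\|\le C_1\mu$): $$\|\Delta x^{ls}_{\mathcal I}-\Delta x^N_{\mathcal I}\|\le C\mu^2\quad\text{and}\quad \|\Delta\lambda^{ls}_{\mathcal I}-\Delta\lambda^N_{\mathcal I}\|\le C\mu^3 .$$
   Context: Problem: minimize $f(x)$ subject to $x\ge0$, $f$ twice continuously differentiable with locally Lipschitz Hessian; $H=\nabla^2f(x)$, $X=\mathrm{diag}(x)$, $\Lambda=\mathrm{diag}(\lambda)$, $e$ all-ones, Euclidean norms. $F_\mu(x,\lambda)=(\nabla f(x)-\lambda,\ \Lambda Xe-\mu e)$, $F'(x,\lambda)=\begin{bmatrix}H&-I\\\Lambda&X\end{bmatrix}$; Newton direction for $\mu^+=\sigma\mu$ ($\sigma\in(0,1)$) solves $F'(\Delta x^N,\Delta\lambda^N)=-F_{\mu^+}(x,\lambda)$. $(x^*,\lambda^* )$ satisfies $\nabla f(x^* )=\lambda^*$, $x^*,\lambda^*\ge0$, $x_i^*\lambda_i^*=0$, $x^*+\lambda^*>0$, $[\nabla^2f(x^* )]_{\mathcal I\mathcal I}\succ0$, $\mathcal A=\{i:x^*_i=0\}$, $\mathcal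 I=\{i:x^*_i>0\}$; $\delta,\hat\mu$ and the barrier trajectory $(x^\mu,\lambda^\mu)$ as usual ($F'$ nonsingular with bounded inverse on $\mathcal B((x^*,\lambda^* ),\delta)$; $F_\mu(x^\mu,\lambda^\mu)=0$, Lipschitz, $\|(x^\mu,\lambda^\mu)-(x^*,\lambda^* )\|\le C_4\mu$). $C_1>0$ fixed. Construction: $\Delta x_i\in\{\Delta x_i^S,\Delta x_i^C\}$ for $i\in\mathcal A$, with $\Delta x_i^S=-\frac{x_i[\nabla f(x)]_i-\mu^+}{x_iH_{ii}+\lambda_i}$, $\Delta x_i^C=-x_i+\mu^+/\lambda_i$; $\Delta x^{ls}_{\mathcal I}$ solves $(H_{\mathcal I\mathcal I}+X_{\mathcal I\mathcal I}^{-1}\Lambda_{\mathcal I\mathcal I})\Delta x^{ls}_{\mathcal I}=-(\nabla f(x)_{\mathcal I}+H_{\mathcal I\mathcal A}\Delta x_{\mathcal A})+\mu^+X_{\mathcal I\mathcal I}^{-1}e$; $\Delta\lambda^{ls}_{\mathcal I}=-\lambda_{\mathcal I}+\mu^+X_{\mathcal I\mathcal I}^{-1}e-X_{\mathcal I\mathcal I}^{-1}\Lambda_{\mathcal I\mathcal I}\Delta x^{ls}_{\mathcal I}$. *)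

From HB Require Import structures.
From mathcomp Require Import all_boot all_order all_algebra.
From mathcomp Require Import reals.
Set Implicit Arguments. Unset Strict Implicit. Unset Printing Implicit Defensive.
Import Order.TTheory GRing.Theory Num.Theory.
Local Open Scope ring_scope.

Section Defs.
Variable R : realType.

Definition enorm m (v : 'cV[R]_m) : R := Num.sqrt (\sum_i (v i 0) ^+ 2).

Definition subnorm m (S : pred 'I_m) (v : 'cV[R]_m) : R :=
  Num.sqrt (\sum_(i | S i) (v i 0) ^+ 2).

(* Frobenius norm of a matrix (used only to state local Lipschitz continuity
   of the Hessian; all norms are equivalent in finite dimension) *)
Definition frobnorm m p (A : 'M[R]_(m, p)) : R :=
  Num.sqrt (\sum_i \sum_j (A i j) ^+ 2).

Definition dotv n (u v : 'cV[R]_n) : R := \sum_i u i 0 * v i 0.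

Definition is_gradient n (f : 'cV[R]_n -> R) (g : 'cV[R]_n -> 'cV[R]_n) :=
  forall x (eps : R), 0 < eps -> exists2 d : R, 0 < d &
    forall h, enorm h < d ->
      `| f (x + h) - f x - dotv (g x) h | <= eps * enorm h.

Definition is_jacobian n (g : 'cV[R]_n -> 'cV[R]_n) (J : 'cV[R]_n -> 'M[R]_n) :=
  forall x (eps : R), 0 < eps -> exists2 d : R, 0 < d &
    forall h, enorm h < d ->
      enorm (g (x + h) - g x - J x *m h) <= eps * enorm h.

Definition continuous_mx n (J : 'cV[R]_n -> 'M[R]_n) :=
  forall x (eps : R), 0 < eps -> exists2 d : R, 0 < d &
    forall y, enorm (y - x) < d -> frobnorm (J y - J x) <= eps.

Definition locally_lipschitz_mx n (J : 'cV[R]_n -> 'M[R]_n) :=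
  forall x, exists r : R, exists L : R, 0 < r /\
    forall y z, enorm (y - x) < r -> enorm (z - x) < r ->
      frobnorm (J y - J z) <= L * enorm (y - z).

Definition posv n (v : 'cV[R]_n) := forall i, 0 < v i 0.
Definition nnegv n (v : 'cV[R]_n) := forall i, 0 <= v i 0.

Definition diagv n (v : 'cV[R]_n) : 'M[R]_n := \matrix_(i, j) (v i 0 *+ (i == j)).

Definition Fmu n (g : 'cV[R]_n -> 'cV[R]_n) (mu : R) (x l : 'cV[R]_n)
  : 'cV[R]_(n + n) :=
  col_mx (g x - l) (\col_i (l i 0 * x i 0 - mu)).

Definition Fprime n (Hf : 'cV[R]_n -> 'M[R]_n) (x l : 'cV[R]_n) : 'M[R]_(n + n) :=
  block_mx (Hf x) (- 1%:M) (diagv l) (diagv x).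

Definition actset n (xs : 'cV[R]_n) : pred 'I_n := fun i => xs i 0 == 0.
Definition inactset n (xs : 'cV[R]_n) : pred 'I_n := fun i => 0 < xs i 0.

Definition dxS n (g : 'cV[R]_n -> 'cV[R]_n) (Hf : 'cV[R]_n -> 'M[R]_n)
  (mup : R) (x l : 'cV[R]_n) (i : 'I_n) : R :=
  - ((x i 0 * g x i 0 - mup) / (x i 0 * Hf x i i + l i 0)).
Definition dxC n (mup : R) (x l : 'cV[R]_n) (i : 'I_n) : R :=
  - x i 0 + mup / l i 0.

(* Delta lambda^ls_I (computed componentwise from Delta x^ls); the
   components outside I are irrelevant and set to 0 *)
Definition dlls n (I : pred 'I_n) (mup : R) (x l dx : 'cV[R]_n) : 'cV[R]_n :=
  \col_i (if I i then - l i 0 + mup / x i 0 - l i 0 / x i 0 * dx i 0 else 0).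

End Defs.

From HB Require Import structures.
From mathcomp Require Import all_boot all_order all_algebra.
From mathcomp Require Import reals.
From mathcomp Require Import ring lra.
Set Implicit Arguments. Unset Strict Implicit. Unset Printing Implicit Defensive.
Import Order.TTheory GRing.Theory Num.Theory.
Local Open Scope ring_scope.

(* Let e = dx - dxN be the error of the constructed step with respect to the
   Newton step for mu+ = sigma mu, and complete it by the multiplier error
   eta_i = -(lambda_i / x_i) e_i on I and eta_i = (H e)_i on A.  Subtracting
   the Newton equations from the equations defining the construction shows
   that (e, eta) solves F'(x, lambda) (e, eta) = (0, w), with w_I = 0 and
   w_i = lambda_i e_i + x_i (H e)_i on A.  For either admissible choice of
   dx_i (S-step or C-step), w_i equals x_i times a quantity of size
   O(mu + |(e, eta)|).  Near the barrier trajectory x_A = O(mu), so the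
   uniform bound on the inverse of F' gives |(e, eta)| <= O(mu) (O(mu) +
   O(1) |(e, eta)|), hence |(e, eta)| = O(mu^2) once mu is small.  On I,
   dl^ls - dlN = -(lambda_i / x_i) e_i with lambda_I = O(mu) and x_I bounded
   below, which gives O(mu^3). *)

Section Norms.
Variable R : realType.

Lemma entry_le_enorm m (v : 'cV[R]_m) i : `|v i 0| <= enorm v.
Proof.
rewrite /enorm -sqrtr_sqr ler_sqrt; last by apply: sumr_ge0 => j _; exact: sqr_ge0.
rewrite (bigD1 i) //= lerDl; apply: sumr_ge0 => j _; exact: sqr_ge0.
Qed.

Lemma entry_le_frobnorm m p (A : 'M[R]_(m, p)) i j : `|A i j| <= frobnorm A.
Proof.
have row_ge0 k : 0 <= \sum_l A k l ^+ 2 by apply: sumr_ge0 => l _; exact: sqr_ge0.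
rewrite /frobnorm -sqrtr_sqr ler_sqrt; last by apply: sumr_ge0 => k _.
rewrite (bigD1 i) //= (bigD1 j (P := predT)) //= -addrA lerDl.
by apply: addr_ge0; [apply: sumr_ge0 => l _; exact: sqr_ge0 | apply: sumr_ge0].
Qed.

Lemma subnorm_le_uniform m (S : pred 'I_m) (v : 'cV[R]_m) c :
  0 <= c -> (forall i, S i -> `|v i 0| <= c) -> subnorm S v <= m%:R * c.
Proof.
move=> c_ge0 vc; rewrite /subnorm -[m%:R * c]ger0_norm ?mulr_ge0 ?ler0n //.
rewrite -sqrtr_sqr ler_sqrt ?sqr_ge0 //.
apply: (@le_trans _ _ (\sum_(i < m | S i) c ^+ 2)).
  apply: ler_sum => i Si; rewrite -[v i 0 ^+ 2]real_normK ?num_real //.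
  by rewrite lerXn2r ?nnegrE ?normr_ge0 // vc.
apply: (@le_trans _ _ (\sum_(i < m) c ^+ 2)).
  by rewrite [X in _ <= X](bigID S) /= lerDl; apply: sumr_ge0 => i _; exact: sqr_ge0.
rewrite sumr_const card_ord -[_ *+ m]mulr_natr exprMn mulrC ler_wpM2r ?sqr_ge0 //.
by rewrite -natrX ler_nat; case: m {S v vc} => // m; rewrite expnS leq_pmulr.
Qed.

Lemma enorm_le_uniform m (v : 'cV[R]_m) c :
  0 <= c -> (forall i, `|v i 0| <= c) -> enorm v <= m%:R * c.
Proof. by move=> c_ge0 vc; apply: (@subnorm_le_uniform m predT). Qed.

Lemma enorm_lt_of_entries m (v : 'cV[R]_m) r :
  0 < r -> (forall i, `|v i 0| <= r / m.+1%:R) -> enorm v < r.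
Proof.
move=> r_gt0 vr; apply: le_lt_trans (enorm_le_uniform _ vr) _.
  by rewrite divr_ge0 ?ltW.
by rewrite mulrA ltr_pdivrMr ?ltr0n // [r * _]mulrC ltr_pM2r // ltr_nat.
Qed.

Lemma col_mx_top_le m (a b : 'cV[R]_m) i : `|a i 0| <= enorm (col_mx a b).
Proof. by rewrite -(col_mxEu a b); exact: entry_le_enorm. Qed.

Lemma col_mx_bot_le m (a b : 'cV[R]_m) i : `|b i 0| <= enorm (col_mx a b).
Proof. by rewrite -(col_mxEd a b); exact: entry_le_enorm. Qed.

Lemma col_mx_entries_le m (a a' b b' : 'cV[R]_m) r :
  enorm (col_mx (a - a') (b - b')) <= r ->
  forall i, `|a i 0 - a' i 0| <= r /\ `|b i 0 - b' i 0| <= r.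
Proof.
move=> abr i; split.
  by have := col_mx_top_le (a - a') (b - b') i; rewrite !mxE => /le_trans; apply.
by have := col_mx_bot_le (a - a') (b - b') i; rewrite !mxE => /le_trans; apply.
Qed.

Lemma enorm_col_mx_le_uniform m (a b : 'cV[R]_m) c : 0 <= c ->
  (forall i, `|a i 0| <= c) -> (forall i, `|b i 0| <= c) ->
  enorm (col_mx a b) <= (m + m)%:R * c.
Proof.
move=> c_ge0 ac bc; apply: enorm_le_uniform => // k.
by rewrite -[k]splitK; case: (split k) => j /=; rewrite ?col_mxEu ?col_mxEd.
Qed.

Lemma mulmx_entry_le p m (A : 'M[R]_(p, m)) (v : 'cV[R]_m) i a b :
  (forall j, `|A i j| <= a) -> (forall j, `|v j 0| <= b) ->
  `|(A *m v) i 0| <= m%:R * (a * b).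
Proof.
move=> Aa vb; rewrite mxE; apply: le_trans (ler_norm_sum _ _ _) _.
apply: (@le_trans _ _ (\sum_(j < m) (a * b))); last first.
  by rewrite sumr_const card_ord mulr_natl.
by apply: ler_sum => j _; rewrite normrM; apply: ler_pM.
Qed.

Lemma diagv_mulmx m (d u : 'cV[R]_m) : diagv d *m u = \col_i (d i 0 * u i 0).
Proof.
have -> : diagv d = diag_mx d^T by apply/matrixP => i j; rewrite !mxE.
by apply/matrixP => i j; rewrite mul_diag_mx !mxE (ord1 j).
Qed.

Lemma scale_le (a b mu : R) :
  0 <= a -> 0 <= b -> mu <= b / (a + 1) -> a * mu <= b.
Proof.
move=> a_ge0 b_ge0 mu_le; apply: le_trans (ler_wpM2l a_ge0 mu_le) _.
rewrite mulrA ler_pdivrMr ?ltr_wpDl //; lra.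
Qed.

End Norms.

Section ErrorEstimate.
Variables (R : realType) (n : nat).
Variables (g : 'cV[R]_n -> 'cV[R]_n) (Hf : 'cV[R]_n -> 'M[R]_n).
Variables (I : pred 'I_n) (x l : 'cV[R]_n) (mup : R) (dx dxN dlN : 'cV[R]_n).
Hypotheses (x_pos : posv x) (l_pos : posv l).
Hypothesis reduced_step : forall i, I i ->
  (Hf x *m dx) i 0 + l i 0 / x i 0 * dx i 0 = - g x i 0 + mup / x i 0.
Hypothesis newton_step : Fprime Hf x l *m col_mx dxN dlN = - Fmu g mup x l.

Definition step_error : 'cV[R]_n := dx - dxN.

Definition mult_error : 'cV[R]_n :=
  \col_i (if I i then - (l i 0 / x i 0 * step_error i 0)
          else (Hf x *m step_error) i 0).

Definition residual : 'cV[R]_n :=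
  \col_i (if I i then 0
          else l i 0 * step_error i 0 + x i 0 * (Hf x *m step_error) i 0).

Let x_neq0 i : x i 0 != 0. Proof. by rewrite gt_eqF. Qed.
Let l_neq0 i : l i 0 != 0. Proof. by rewrite gt_eqF. Qed.

Lemma Hf_step_error i :
  (Hf x *m step_error) i 0 = (Hf x *m dx) i 0 - (Hf x *m dxN) i 0.
Proof. by rewrite mulmxBr [LHS]mxE [X in _ + X]mxE. Qed.

Lemma newton_rows i :
  (Hf x *m dxN) i 0 - dlN i 0 = l i 0 - g x i 0 /\
  l i 0 * dxN i 0 + x i 0 * dlN i 0 = mup - l i 0 * x i 0.
Proof.
move: newton_step; rewrite /Fprime /Fmu mul_block_col mulNmx mul1mx !diagv_mulmx.
rewrite opp_col_mx => /eq_col_mx[row1 row2]; split.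
  move: (congr1 (fun v : 'cV[R]_n => v i 0) row1) => /=.
  by rewrite [X in X = _ -> _]mxE [X in _ + X = _ -> _]mxE => ->; rewrite !mxE opprB.
by move: (congr1 (fun v : 'cV[R]_n => v i 0) row2); rewrite !mxE opprB.
Qed.

Lemma newton_dlN i : dlN i 0 = (mup - l i 0 * x i 0 - l i 0 * dxN i 0) / x i 0.
Proof.
have [_ row2] := newton_rows i.
by rewrite -row2 addrAC subrr add0r mulrC mulKf.
Qed.

Lemma step_error_entry i : step_error i 0 = dx i 0 - dxN i 0.
Proof. by rewrite !mxE. Qed.

Lemma mult_error_entry i : mult_error i 0 =
  if I i then - (l i 0 / x i 0 * step_error i 0) else (Hf x *m step_error) i 0.
Proof. by rewrite [LHS]mxE. Qed.

Lemma residual_entry i : residual i 0 =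
  if I i then 0 else l i 0 * step_error i 0 + x i 0 * (Hf x *m step_error) i 0.
Proof. by rewrite [LHS]mxE. Qed.

Lemma error_system :
  Fprime Hf x l *m col_mx step_error mult_error = col_mx 0 residual.
Proof.
rewrite /Fprime mul_block_col mulNmx mul1mx !diagv_mulmx; congr col_mx.
  apply/matrixP => i j; rewrite (ord1 j) [LHS]mxE [X in _ + X]mxE mult_error_entry.
  rewrite [RHS]mxE; case: ifP => Ii; last by rewrite subrr.
  have [row1 _] := newton_rows i.
  have reduced := reduced_step Ii.
  rewrite Hf_step_error step_error_entry.
  have -> : (Hf x *m dxN) i 0 = dlN i 0 + l i 0 - g x i 0 by lra.
  have -> : (Hf x *m dx) i 0 = - g x i 0 + mup / x i 0 - l i 0 / x i 0 * dx i 0 by lra.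
  by rewrite newton_dlN; field; apply: x_neq0.
apply/matrixP => i j; rewrite (ord1 j) [LHS]mxE [X in X + _]mxE [X in _ + X]mxE mult_error_entry residual_entry.
by case: ifP => // _; field; apply: x_neq0.
Qed.

Lemma dlls_error i : I i ->
  (dlls I mup x l dx - dlN) i 0 = - (l i 0 / x i 0 * step_error i 0).
Proof.
move=> Ii; rewrite [LHS]mxE [X in _ + X]mxE [X in X + _]mxE Ii.
by rewrite step_error_entry newton_dlN; field; apply: x_neq0.
Qed.

(* Outside I, both admissible steps leave a residual carrying the factor
   x_i, which is O(mu) on the active set. *)
Lemma residual_S i : ~~ I i -> x i 0 * Hf x i i + l i 0 != 0 ->
  dx i 0 = dxS g Hf mup x l i ->
  residual i 0 = x i 0 * ((Hf x *m dx) i 0 - Hf x i i * dx i 0).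
Proof.
move=> /negbTE nIi den_neq0 dxi; have [row1 row2] := newton_rows i.
rewrite residual_entry nIi Hf_step_error step_error_entry dxi /dxS.
have -> : (Hf x *m dxN) i 0 = dlN i 0 + l i 0 - g x i 0 by lra.
have -> : mup = l i 0 * x i 0 + l i 0 * dxN i 0 + x i 0 * dlN i 0 by lra.
by field.
Qed.

Lemma residual_C i : ~~ I i -> dx i 0 = dxC mup x l i ->
  residual i 0 = x i 0 * (dlN i 0 + (Hf x *m step_error) i 0).
Proof.
move=> /negbTE nIi dxi; have [_ row2] := newton_rows i.
rewrite residual_entry nIi step_error_entry dxi /dxC.
have -> : mup = l i 0 * x i 0 + l i 0 * dxN i 0 + x i 0 * dlN i 0 by lra.
by field; apply: l_neq0.
Qed.

Variables (mu d c Hb K Ma : R).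
Hypotheses (mu_gt0 : 0 < mu) (d_gt0 : 0 < d) (c_ge0 : 0 <= c).
Hypotheses (Hb_ge0 : 0 <= Hb) (K_ge0 : 0 <= K) (Ma_ge0 : 0 <= Ma).
Hypothesis step_choice : forall i, ~~ I i ->
  dx i 0 = dxS g Hf mup x l i \/ dx i 0 = dxC mup x l i.
Hypothesis active_bounds : forall i, ~~ I i -> d <= l i 0 /\ x i 0 <= c * mu.
Hypothesis inactive_bounds : forall i, I i -> d <= x i 0 /\ l i 0 <= c * mu.
Hypothesis hessian_bound : forall j k, `|Hf x j k| <= Hb.
Hypothesis newton_small : forall i, `|dxN i 0| <= K * mu /\ `|dlN i 0| <= K * mu.
Hypothesis Fprime_unit : Fprime Hf x l \in unitmx.
Hypothesis inverse_bound :
  forall v, enorm (invmx (Fprime Hf x l) *m v) <= Ma * enorm v.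

(* The residual is at most c mu (gain_mu mu + gain_err E), E = |(e, eta)|;
   inverting F' contracts by contraction mu, which gives E = O(mu^2). *)
Definition gain_err : R := n.+1%:R * Hb.
Definition gain_mu : R := K + gain_err * K.
Definition contraction : R := Ma * (n + n)%:R * c.
Definition ls_constant : R := n%:R * (2 * contraction * gain_mu) * (1 + c / d).

(* mu is small enough for the S-step to be well defined and for the
   inverse of F' to contract the error system. *)
Definition ls_threshold : R :=
  Num.min (d / 2 / (c * Hb + 1)) (1 / 2 / (contraction * gain_err + 1)).

Hypothesis mu_small : mu <= ls_threshold.

Local Notation E := (enorm (col_mx step_error mult_error)).

Let mu_ge0 : 0 <= mu. Proof. exact: ltW. Qed.
Let E_ge0 : 0 <= E. Proof. exact: sqrtr_ge0. Qed.
Lemma gain_err_ge0 : 0 <= gain_err. Proof. exact: mulr_ge0. Qed.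
Let gain_mu_ge0 : 0 <= gain_mu. Proof. by rewrite addr_ge0 ?mulr_ge0 ?gain_err_ge0. Qed.
Lemma contraction_ge0 : 0 <= contraction. Proof. by rewrite !mulr_ge0. Qed.

Lemma ls_threshold_gt0 : 0 < ls_threshold.
Proof.
have contr_ge0 := mulr_ge0 contraction_ge0 gain_err_ge0.
by rewrite lt_min !divr_gt0 ?ltr_wpDl ?mulr_ge0.
Qed.

Let small_S : c * Hb * mu <= d / 2.
Proof.
apply: scale_le; first exact: mulr_ge0.
  by rewrite divr_ge0 // ltW.
by apply: le_trans mu_small _; rewrite ge_min lexx.
Qed.

Let small_contraction : contraction * gain_err * mu <= 1 / 2.
Proof.
apply: scale_le; first exact: mulr_ge0 contraction_ge0 gain_err_ge0.
  by rewrite divr_ge0 ?ler01 ?ler0n.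
by apply: le_trans mu_small _; rewrite ge_min lexx orbT.
Qed.

Lemma step_error_le i : `|step_error i 0| <= E.
Proof. exact: col_mx_top_le. Qed.

Lemma dx_le i : `|dx i 0| <= K * mu + E.
Proof.
have -> : dx i 0 = dxN i 0 + step_error i 0 by rewrite step_error_entry; ring.
apply: le_trans (ler_normD _ _) _.
by apply: lerD; [case: (newton_small i) | exact: step_error_le].
Qed.

(* On the active set the S-step is well defined: x_i H_ii = O(mu) is
   dominated by lambda_i >= d. *)
Lemma dxS_denominator_gt0 i : ~~ I i -> 0 < x i 0 * Hf x i i + l i 0.
Proof.
move=> nIi; have [l_ge x_le] := active_bounds nIi.
have lower : - (c * Hb * mu) <= x i 0 * Hf x i i.
  apply: lerNnormlW; rewrite normrM ger0_norm ?(ltW (x_pos i)) // mulrAC.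
  by apply: ler_pM => //; exact: ltW.
by have := small_S; have := d_gt0; lra.
Qed.

Lemma residual_le i : `|residual i 0| <= c * mu * (gain_mu * mu + gain_err * E).
Proof.
have bound_ge0 : 0 <= gain_mu * mu + gain_err * E.
  by rewrite addr_ge0 ?mulr_ge0 ?gain_err_ge0.
case: (boolP (I i)) => Ii; first by rewrite residual_entry Ii normr0 !mulr_ge0.
have [_ x_le] := active_bounds Ii.
suff: `|residual i 0 / x i 0| <= gain_mu * mu + gain_err * E.
  rewrite normrM normfV (gtr0_norm (x_pos i)) ler_pdivrMr // => h.
  by apply: le_trans h _; rewrite mulrC ler_wpM2r.
have n_le : (n%:R : R) <= n.+1%:R by rewrite ler_nat.
case: (step_choice Ii) => dxi.
- rewrite (residual_S Ii (lt0r_neq0 (dxS_denominator_gt0 Ii)) dxi) mulrC mulKf //.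
  apply: le_trans (ler_normB _ _) _.
  have Hdx := mulmx_entry_le (hessian_bound i) dx_le.
  have Hiidx : `|Hf x i i * dx i 0| <= Hb * (K * mu + E).
    by rewrite normrM; apply: ler_pM; rewrite ?normr_ge0 ?hessian_bound ?dx_le.
  apply: le_trans (lerD Hdx Hiidx) _.
  rewrite /gain_mu /gain_err -[n.+1]addn1 natrD.
  have : 0 <= K * mu by rewrite mulr_ge0.
  lra.
- rewrite (residual_C Ii dxi) mulrC mulKf //.
  apply: le_trans (ler_normD _ _) _; apply: lerD.
    case: (newton_small i) => _ dlN_le; apply: le_trans dlN_le _.
    by rewrite ler_wpM2r // /gain_mu lerDl mulr_ge0 ?gain_err_ge0.
  apply: le_trans (mulmx_entry_le (hessian_bound i) step_error_le) _.
  by rewrite mulrA ler_wpM2r // ler_wpM2r.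
Qed.

(* E = O(mu^2): the error system and the bound on the inverse of F' give
   E <= contraction mu (gain_mu mu + gain_err E), and contraction gain_err mu
   <= 1/2 absorbs the last term. *)
Lemma error_norm_le : E <= 2 * contraction * gain_mu * mu ^+ 2.
Proof.
have solved : col_mx step_error mult_error = invmx (Fprime Hf x l) *m col_mx 0 residual.
  by rewrite -error_system mulKmx.
have : E <= Ma * ((n + n)%:R * (c * mu * (gain_mu * mu + gain_err * E))).
  rewrite [in X in X <= _]solved; apply: le_trans (inverse_bound _) _.
  apply: ler_wpM2l => //; apply: enorm_col_mx_le_uniform => [||i]; last exact: residual_le.
    by rewrite !mulr_ge0 ?addr_ge0 ?mulr_ge0.
  by move=> i; rewrite mxE normr0 !mulr_ge0 ?addr_ge0 ?mulr_ge0.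
have -> : Ma * ((n + n)%:R * (c * mu * (gain_mu * mu + gain_err * E)))
  = contraction * gain_mu * mu ^+ 2 + contraction * gain_err * mu * E.
  by rewrite /contraction; ring.
have : contraction * gain_err * mu * E <= 1 / 2 * E by rewrite ler_wpM2r.
lra.
Qed.

Lemma ls_constant_ge0 : 0 <= ls_constant.
Proof.
apply: mulr_ge0; last by rewrite addr_ge0 // divr_ge0 // ltW.
by rewrite mulr_ge0 ?ler0n // !mulr_ge0 ?contraction_ge0.
Qed.

Lemma ls_error_estimate :
  subnorm I step_error <= ls_constant * mu ^+ 2 /\
  subnorm I (dlls I mup x l dx - dlN) <= ls_constant * mu ^+ 3.
Proof.
set B := 2 * contraction * gain_mu.
have B_ge0 : 0 <= B by rewrite /B !mulr_ge0.
have cd_ge0 : 0 <= c / d by rewrite divr_ge0 // ltW.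
have e_le i : `|step_error i 0| <= B * mu ^+ 2.
  exact: le_trans (step_error_le i) error_norm_le.
split.
  apply: le_trans (subnorm_le_uniform (c := B * mu ^+ 2) _ _) _.
  - by rewrite mulr_ge0 ?exprn_ge0.
  - by move=> i _; apply: e_le.
  rewrite /ls_constant -/B -!mulrA !ler_wpM2l ?ler0n // -[X in X <= _]mul1r ler_wpM2r ?exprn_ge0 //.
  by rewrite lerDl.
apply: le_trans (subnorm_le_uniform (c := c / d * B * mu ^+ 3) _ _) _.
- by rewrite mulr_ge0 ?exprn_ge0 // mulr_ge0.
- move=> i Ii; have [x_ge l_le] := inactive_bounds Ii.
  have x_gt0 := x_pos i.
  rewrite dlls_error // normrN normrM exprSr.
  have lx_le : `|l i 0 / x i 0| <= c * mu / d.
    have l_gt0 := l_pos i.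
    rewrite ger0_norm; last by rewrite divr_ge0 // ltW.
    by apply: ler_pM; rewrite ?invr_ge0 ?lef_pV2 // ltW.
  have -> : c / d * B * (mu ^+ 2 * mu) = (c * mu / d) * (B * mu ^+ 2) by ring.
  by apply: ler_pM; rewrite ?normr_ge0.
have -> : ls_constant * mu ^+ 3 = n%:R * B * mu ^+ 3 + n%:R * (c / d * B * mu ^+ 3).
  by rewrite /ls_constant -/B; ring.
by rewrite lerDr !mulr_ge0 ?exprn_ge0.
Qed.

End ErrorEstimate.

Section Neighbourhood.
Variable R : realType.

Lemma pos_lower_bound m (p : 'I_m -> R) :
  (forall i, 0 < p i) -> exists2 d, 0 < d & forall i, d <= p i.
Proof.
move=> p_gt0; exists (\big[Num.min/1]_i p i).
  by elim/big_ind: _ => // a b a_gt0 b_gt0; rewrite lt_min a_gt0.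
by move=> i; rewrite (bigD1 i) //= ge_min lexx.
Qed.

Lemma hessian_locally_bounded n (Hf : 'cV[R]_n -> 'M[R]_n) (xs : 'cV[R]_n) :
  continuous_mx Hf -> exists2 r, 0 < r & forall x, enorm (x - xs) < r ->
    forall j k, `|Hf x j k| <= frobnorm (Hf xs) + 1.
Proof.
move=> Hcont; have [r r_gt0 near] := Hcont xs 1 ltr01.
exists r => // x /near dist j k.
have -> : Hf x j k = Hf xs j k + (Hf x - Hf xs) j k by rewrite !mxE; ring.
apply: le_trans (ler_normD _ _) _; apply: lerD; first exact: entry_le_frobnorm.
exact: le_trans (entry_le_frobnorm _ j k) dist.
Qed.

Lemma Fmu_entries n (g : 'cV[R]_n -> 'cV[R]_n) mu (x l : 'cV[R]_n) r :
  enorm (Fmu g mu x l) <= r ->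
  forall i, `|g x i 0 - l i 0| <= r /\ `|l i 0 * x i 0 - mu| <= r.
Proof.
move=> Fr i; split; apply: le_trans Fr.
  by have := col_mx_top_le (g x - l) (\col_i (l i 0 * x i 0 - mu)) i; rewrite !mxE.
by have := col_mx_bot_le (g x - l) (\col_i (l i 0 * x i 0 - mu)) i; rewrite !mxE.
Qed.

(* If a* = 0 and b* >= 2 d (strict complementarity), a point (a, b) with b
   within d of b* keeps b >= d, and approximate centrality b a ~ mu then
   forces a = O(mu). *)
Lemma near_complementary (d C1 mu a b bs : R) :
  0 < d -> d <= bs / 2 -> `|b - bs| <= d -> 0 <= a ->
  `|b * a - mu| <= C1 * mu -> d <= b /\ a <= (1 + C1) / d * mu.
Proof.
move=> d_gt0 d_le /lerNnormlW b_near a_ge0 /ler_normlP[_ ba_le].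
have b_ge : d <= b by lra.
split=> //; have ba_ge := ler_wpM2r a_ge0 b_ge.
rewrite [X in _ <= X]mulrAC ler_pdivlMr //; lra.
Qed.

Lemma not_inactive_active n (xs : 'cV[R]_n) i :
  nnegv xs -> ~~ inactset xs i -> actset xs i.
Proof. by move=> xs_ge0; rewrite /actset eq_le xs_ge0 andbT leNgt. Qed.

(* Applied to the active pairs (x_i, lambda_i) and the inactive pairs
   (lambda_i, x_i). *)
Lemma complementarity_bounds n (xs ls x l : 'cV[R]_n) d C1 mu :
  nnegv xs -> (forall i, xs i 0 * ls i 0 = 0) ->
  0 < d -> (forall i, d <= (xs i 0 + ls i 0) / 2) ->
  (forall i, `|x i 0 - xs i 0| <= d /\ `|l i 0 - ls i 0| <= d) ->
  posv x -> posv l -> (forall i, `|l i 0 * x i 0 - mu| <= C1 * mu) ->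
  (forall i, ~~ inactset xs i -> d <= l i 0 /\ x i 0 <= (1 + C1) / d * mu) /\
  (forall i, inactset xs i -> d <= x i 0 /\ l i 0 <= (1 + C1) / d * mu).
Proof.
move=> xs_ge0 compl d_gt0 d_le close x_pos l_pos central; split=> i Ii.
  have xs0 : xs i 0 = 0 by apply/eqP; exact: not_inactive_active.
  have := d_le i; rewrite xs0 add0r => ls_ge.
  have [_ l_near] := close i.
  exact: near_complementary d_gt0 ls_ge l_near (ltW (x_pos i)) (central i).
have ls0 : ls i 0 = 0.
  by have /eqP := compl i; rewrite mulf_eq0 (gt_eqF Ii) => /eqP.
have := d_le i; rewrite ls0 addr0 => xs_ge.
have [x_near _] := close i.
apply: near_complementary d_gt0 xs_ge x_near (ltW (l_pos i)) _.
by rewrite mulrC central.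
Qed.

Lemma trajectory_neighbourhood n (xs ls : 'cV[R]_n) (xmu lmu : R -> 'cV[R]_n)
  (C4 muhat t : R) : 0 < t -> 0 < muhat ->
  (forall mu, 0 < mu -> mu <= muhat ->
     enorm (col_mx (xmu mu - xs) (lmu mu - ls)) <= C4 * mu) ->
  exists rho mu1, [/\ 0 < rho, 0 < mu1, mu1 <= muhat &
    forall mu (x l : 'cV[R]_n), 0 < mu -> mu <= mu1 ->
      enorm (col_mx (x - xmu mu) (l - lmu mu)) < rho ->
      forall i, `|x i 0 - xs i 0| <= t /\ `|l i 0 - ls i 0| <= t].
Proof.
move=> t_gt0 muhat_gt0 traj.
have t2_gt0 : 0 < t / 2 by rewrite divr_gt0.
exists (t / 2), (Num.min muhat (t / 2 / (`|C4| + 1))); split => //.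
- by rewrite lt_min muhat_gt0 divr_gt0 ?ltr_wpDl.
- by rewrite ge_min lexx.
move=> mu x l mu_gt0; rewrite le_min => /andP[mu_le_hat mu_le] near i.
have traj_le : C4 * mu <= t / 2.
  apply: le_trans (scale_le (normr_ge0 C4) (ltW t2_gt0) mu_le).
  by rewrite ler_wpM2r ?ler_norm // ltW.
have [x_traj l_traj] := col_mx_entries_le (ltW near) i.
have [traj_x traj_l] := col_mx_entries_le (le_trans (traj _ mu_gt0 mu_le_hat) traj_le) i.
have triangle (a b e : R) : `|a - b| <= t / 2 -> `|b - e| <= t / 2 -> `|a - e| <= t.
  move=> ab be; rewrite -(subrKA b) (splitr t); exact: le_trans (ler_normD _ _) (lerD ab be).
by split; [exact: triangle x_traj traj_x | exact: triangle l_traj traj_l].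
Qed.

Lemma near_trajectory_bounds n (g : 'cV[R]_n -> 'cV[R]_n) (Hf : 'cV[R]_n -> 'M[R]_n)
  (xs ls : 'cV[R]_n) (xmu lmu : R -> 'cV[R]_n) (C4 muhat C1 : R) :
  continuous_mx Hf -> nnegv xs -> (forall i, xs i 0 * ls i 0 = 0) ->
  (forall i, 0 < xs i 0 + ls i 0) -> 0 < muhat ->
  (forall mu, 0 < mu -> mu <= muhat ->
     enorm (col_mx (xmu mu - xs) (lmu mu - ls)) <= C4 * mu) ->
  exists d rho mu1, [/\ 0 < d, 0 < rho, 0 < mu1, mu1 <= muhat &
    forall mu (x l : 'cV[R]_n), 0 < mu -> mu <= mu1 -> posv x -> posv l ->
      enorm (col_mx (x - xmu mu) (l - lmu mu)) < rho ->
      enorm (Fmu g mu x l) <= C1 * mu ->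
      [/\ (forall i, ~~ inactset xs i -> d <= l i 0 /\ x i 0 <= (1 + C1) / d * mu),
          (forall i, inactset xs i -> d <= x i 0 /\ l i 0 <= (1 + C1) / d * mu) &
          (forall j k, `|Hf x j k| <= frobnorm (Hf xs) + 1)]].
Proof.
move=> Hcont xs_ge0 compl strict muhat_gt0 traj.
have half_gt0 i : 0 < (xs i 0 + ls i 0) / 2 by rewrite divr_gt0.
have [d d_gt0 d_le] := pos_lower_bound half_gt0.
have [dH dH_gt0 Hf_bounded] := hessian_locally_bounded xs Hcont.
pose t := Num.min d (dH / n.+1%:R).
have t_gt0 : 0 < t by rewrite lt_min d_gt0 divr_gt0.
have [rho [mu1 [rho_gt0 mu1_gt0 mu1_le close]]] :=
  trajectory_neighbourhood t_gt0 muhat_gt0 traj.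
exists d, rho, mu1; split=> //.
move=> mu x l mu_gt0 mu_le x_pos l_pos near F_le.
have close_t := close mu x l mu_gt0 mu_le near.
have close_d i : `|x i 0 - xs i 0| <= d /\ `|l i 0 - ls i 0| <= d.
  have t_le_d : t <= d by rewrite ge_min lexx.
  by have [x_near l_near] := close_t i; split; apply: le_trans t_le_d.
have [act inact] := complementarity_bounds xs_ge0 compl d_gt0 d_le close_d x_pos l_pos
  (fun i => (Fmu_entries F_le i).2).
split=> //; apply: Hf_bounded; apply: enorm_lt_of_entries => // i.
by rewrite !mxE; apply: le_trans (close_t i).1 _; rewrite ge_min lexx orbT.
Qed.

Lemma newton_step_bound n (g : 'cV[R]_n -> 'cV[R]_n) (Hf : 'cV[R]_n -> 'M[R]_n)
  (x l : 'cV[R]_n) (mu sigma C1 Ma : R) (dxN dlN : 'cV[R]_n) :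
  0 < mu -> 0 < sigma -> sigma < 1 -> 0 <= C1 -> 0 <= Ma ->
  Fprime Hf x l \in unitmx ->
  (forall v, enorm (invmx (Fprime Hf x l) *m v) <= Ma * enorm v) ->
  enorm (Fmu g mu x l) <= C1 * mu ->
  Fprime Hf x l *m col_mx dxN dlN = - Fmu g (sigma * mu) x l ->
  forall i, `|dxN i 0| <= Ma * (n + n)%:R * (C1 + 1) * mu /\
            `|dlN i 0| <= Ma * (n + n)%:R * (C1 + 1) * mu.
Proof.
move=> mu_gt0 sigma_gt0 sigma_lt1 C1_ge0 Ma_ge0 Funit Finv F_le newton.
have solved : col_mx dxN dlN = invmx (Fprime Hf x l) *m - Fmu g (sigma * mu) x l.
  by rewrite -newton mulKmx.
have Fs_le : enorm (- Fmu g (sigma * mu) x l) <= (n + n)%:R * ((C1 + 1) * mu).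
  rewrite /Fmu opp_col_mx; apply: enorm_col_mx_le_uniform => [|i|i].
  - by rewrite mulr_ge0 ?addr_ge0 // ltW.
  - have [gl_le _] := Fmu_entries F_le i.
    rewrite !mxE normrN; apply: le_trans gl_le _.
    by rewrite ler_wpM2r ?lerDl // ltW.
  - have [_ /ler_normlP[lo hi]] := Fmu_entries F_le i.
    rewrite !mxE normrN; apply/ler_normlP; split; nra.
have step_le : enorm (col_mx dxN dlN) <= Ma * (n + n)%:R * (C1 + 1) * mu.
  rewrite solved; apply: le_trans (Finv _) _.
  by rewrite -!mulrA ler_wpM2l // mulrA.
by move=> i; split; apply: le_trans step_le; [apply: col_mx_top_le | apply: col_mx_bot_le].
Qed.

End Neighbourhood.

Theorem mainTheorem7
  (R : realType) (n : nat)
  (f : 'cV[R]_n -> R) (g : 'cV[R]_n -> 'cV[R]_n) (Hf : 'cV[R]_n -> 'M[R]_n)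
  (Hgrad : is_gradient f g) (Hjac : is_jacobian g Hf)
  (Hcont : continuous_mx Hf) (Hlip : locally_lipschitz_mx Hf)
  (xs ls : 'cV[R]_n)
  (Hkkt : g xs = ls) (Hxs : nnegv xs) (Hls : nnegv ls)
  (Hcompl : forall i, xs i 0 * ls i 0 = 0)
  (Hstrict : forall i, 0 < xs i 0 + ls i 0)
  (HpdII : forall v : 'cV[R]_n, (forall i, actset xs i -> v i 0 = 0) -> v != 0 ->
            0 < dotv v (Hf xs *m v))
  (delta muhat M : R) (Hdelta : 0 < delta) (Hmuhat : 0 < muhat)
  (Hinv : forall x l : 'cV[R]_n,
      enorm (col_mx (x - xs) (l - ls)) < delta ->
      Fprime Hf x l \in unitmx /\
      forall v : 'cV[R]_(n + n), enorm (invmx (Fprime Hf x l) *m v) <= M * enorm v)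
  (xmu lmu : R -> 'cV[R]_n) (C4 Ltraj : R)
  (Htraj0 : forall mu, 0 < mu -> mu <= muhat -> Fmu g mu (xmu mu) (lmu mu) = 0)
  (Htrajpos : forall mu, 0 < mu -> mu <= muhat -> posv (xmu mu) /\ posv (lmu mu))
  (Htrajlip : forall mu1 mu2, 0 < mu1 -> mu1 <= muhat -> 0 < mu2 -> mu2 <= muhat ->
      enorm (col_mx (xmu mu1 - xmu mu2) (lmu mu1 - lmu mu2)) <= Ltraj * `|mu1 - mu2|)
  (Htrajdist : forall mu, 0 < mu -> mu <= muhat ->
      enorm (col_mx (xmu mu - xs) (lmu mu - ls)) <= C4 * mu)
  (C1 : R) (HC1 : 0 < C1)
  (sigma : R) (Hsigma0 : 0 < sigma) (Hsigma1 : sigma < 1) :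
  exists rho : R, exists mubar : R, exists C : R,
    [/\ 0 < rho, 0 < mubar, mubar <= muhat, 0 < C &
    forall (mu : R) (x l : 'cV[R]_n),
      0 < mu -> mu <= mubar ->
      enorm (col_mx (x - xs) (l - ls)) < delta ->
      posv x -> posv l ->
      enorm (col_mx (x - xmu mu) (l - lmu mu)) < rho ->
      enorm (Fmu g mu x l) <= C1 * mu ->
      forall (dx dxN dlN : 'cV[R]_n),
        (* Delta x_A: each component is the S- or the C-step *)
        (forall i, actset xs i ->
           dx i 0 = dxS g Hf (sigma * mu) x l i \/ dx i 0 = dxC (sigma * mu) x l i) ->
        (* Delta x^ls_I solves the reduced system *)
        (forall i, inactset xs i ->
           (Hf x *m dx) i 0 + l i 0 / x i 0 * dx i 0 = - g x i 0 + sigma * mu / x i 0) ->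
        (* Newton direction for mu^+ = sigma mu *)
        Fprime Hf x l *m col_mx dxN dlN = - Fmu g (sigma * mu) x l ->
        subnorm (inactset xs) (dx - dxN) <= C * mu ^+ 2 /\
        subnorm (inactset xs) (dlls (inactset xs) (sigma * mu) x l dx - dlN)
          <= C * mu ^+ 3].
Proof.
have [d [rho [mu1 [d_gt0 rho_gt0 mu1_gt0 mu1_le near_bounds]]]] :=
  near_trajectory_bounds g C1 Hcont Hxs Hcompl Hstrict Hmuhat Htrajdist.
pose Hb := frobnorm (Hf xs) + 1; pose c := (1 + C1) / d.
pose K := `|M| * (n + n)%:R * (C1 + 1).
have Hb_ge0 : 0 <= Hb by rewrite addr_ge0 ?sqrtr_ge0.
have c_ge0 : 0 <= c by rewrite divr_ge0 ?addr_ge0 // ltW.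
have K_ge0 : 0 <= K by rewrite !mulr_ge0 ?addr_ge0 // ltW.
have mu0_gt0 := ls_threshold_gt0 n d_gt0 c_ge0 Hb_ge0 (normr_ge0 M).
exists rho, (Num.min mu1 (ls_threshold n d c Hb `|M|)), (ls_constant n d c Hb K `|M| + 1).
split=> //; first by rewrite lt_min mu1_gt0.
- by rewrite ge_min mu1_le.
- by rewrite ltr_pwDr ?ls_constant_ge0 ?normr_ge0.
move=> mu x l mu_gt0 mu_le ball x_pos l_pos near F_le dx dxN dlN choice reduced newton.
move: mu_le; rewrite le_min => /andP[mu_le1 mu_le0].
have [Funit Finv] := Hinv x l ball.
have Finv_abs v : enorm (invmx (Fprime Hf x l) *m v) <= `|M| * enorm v.
  by apply: le_trans (Finv v) _; rewrite ler_wpM2r ?sqrtr_ge0 ?ler_norm.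
have [act inact Hf_x] := near_bounds mu x l mu_gt0 mu_le1 x_pos l_pos near F_le.
have step_choice i : ~~ inactset xs i ->
    dx i 0 = dxS g Hf (sigma * mu) x l i \/ dx i 0 = dxC (sigma * mu) x l i.
  by move=> /(not_inactive_active Hxs); apply: choice.
have Nsmall := newton_step_bound mu_gt0 Hsigma0 Hsigma1 (ltW HC1) (normr_ge0 M)
  Funit Finv_abs F_le newton.
have [est2 est3] := ls_error_estimate x_pos l_pos reduced newton mu_gt0 d_gt0 c_ge0
  Hb_ge0 K_ge0 (normr_ge0 M) step_choice act inact Hf_x Nsmall Funit Finv_abs mu_le0.
split; [apply: le_trans est2 _ | apply: le_trans est3 _];
  by rewrite ler_wpM2r ?exprn_ge0 ?lerDl // ltW.
Qed.
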